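(* Let $\mathcal{L}$ be a Tarskian, Boolean logic, $K$ a theory, $\delta$ a choice function, $\mathcal{C}\subseteq K$ a cleaving, and $\pi:\mathbb{N}\to\mathcal{C}$ a bijection. Then the composition $\delta_\pi$, defined by $\delta_\pi(\varphi):=\delta(\varphi\lor\min_\pi(\varphi))$, is a choice function.
   Context: Logic $(\mathrm{Fm},\mathrm{Cn})$: countable $\mathrm{Fm}$; Tarskian: $\mathrm{Cn}$ monotone, extensive, idempotent; Boolean: there are $\neg,\lor$ with $\mathrm{Cn}(\{\varphi\})\cap\mathrm{Cn}(\{\neg\varphi\})=\mathrm{Cn}(\emptyset)$, $\mathrm{Cn}(\{\varphi,\neg\varphi\})=\mathrm{Fm}$, and usual $\lor$-introduction/elimination relative to $\mathrm{Cn}$; $\bot$ denotes a formula with $\mathrm{Cn}(\{\bot\})=\mathrm{Fm}$. $\varphi\equiv\psi$ iff $\mathrm{Cn}(\{\varphi\})=\mathrm{Cn}(\{\psi\})$. $\mathrm{CCT}$ = complete consistent theories; $\overline{\varphi}:=\{X\in\mathrm{CCT}\mid\varphi\notin X\}$. A choice function is $\delta:\mathrm{Fm}\to\mathcal{P}(\mathrm{CCT})$ with (CF1) $\delta(\varphi)\neq\emptyset$; (CF2) if $\varphi\notin\mathrm{Cn}(\emptyset)$ then $\delta(\varphi)\subseteq\overline{\varphi}$; (CF3) $\varphi\equiv\psi$ implies $\delta(\varphi)=\delta(\psi)$. A cleaving is an infinite set $\mathcal{C}$ of formulae with, for distinct $\varphi,\psi\in\mathcal{C}$, $\varphi\not\equiv\psi$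 and $\varphi\lor\psi\in\mathrm{Cn}(\emptyset)$. $\min_\pi(\varphi):=\pi(i)$ for the least $i\in\mathbb{N}$ with $\overline{\varphi}\cap\overline{\pi(i)}\neq\emptyset$, and $\min_\pi(\varphi):=\bot$ if no such $i$ exists. *)

From Stdlib Require Import Classical ClassicalEpsilon List.

Set Implicit Arguments.
Unset Strict Implicit.

Section Logic.
Variable Fm : Type.
Variable Cn : (Fm -> Prop) -> (Fm -> Prop).
Variable neg : Fm -> Fm.
Variable or : Fm -> Fm -> Fm.

Definition emptyF : Fm -> Prop := fun _ => False.
Definition single (p : Fm) : Fm -> Prop := fun x => x = p.
Definition pair (p q : Fm) : Fm -> Prop := fun x => x = p \/ x = q.
Definition addF (X : Fm -> Prop) (p : Fm) : Fm -> Prop := fun x => X x \/ x = p.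
Definition sub (X Y : Fm -> Prop) : Prop := forall x, X x -> Y x.
Definition seteq (X Y : Fm -> Prop) : Prop := forall x, X x <-> Y x.

Definition countable_fm : Prop := exists f : Fm -> nat, forall x y, f x = f y -> x = y.

Definition tarskian : Prop :=
  (forall X, sub X (Cn X)) /\
  (forall X Y, sub X Y -> sub (Cn X) (Cn Y)) /\
  (forall X, seteq (Cn (Cn X)) (Cn X)).

Definition boolean : Prop :=
  (forall p, seteq (fun x => Cn (single p) x /\ Cn (single (neg p)) x) (Cn emptyF)) /\
  (forall p, seteq (Cn (pair p (neg p))) (fun _ => True)) /\
  (forall X p q, Cn X p -> Cn X (or p q)) /\
  (forall X p q, Cn X q -> Cn X (or p q)) /\
  (forall X p q r, Cn (addF X p) r -> Cn (addF X q) r -> Cn (addF X (or p q)) r).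

Definition is_bot (b : Fm) : Prop := seteq (Cn (single b)) (fun _ => True).

Definition equivF (p q : Fm) : Prop := seteq (Cn (single p)) (Cn (single q)).

Definition theory (X : Fm -> Prop) : Prop := seteq (Cn X) X.

Definition CCT (X : Fm -> Prop) : Prop :=
  theory X /\ (exists x, ~ X x) /\ (forall p, X p \/ X (neg p)).

Definition over (p : Fm) (X : Fm -> Prop) : Prop := CCT X /\ ~ X p.

Definition choice_function (d : Fm -> (Fm -> Prop) -> Prop) : Prop :=
  (forall p X, d p X -> CCT X) /\               (* d : Fm -> P(CCT) *)
  (forall p, exists X, d p X) /\
  (forall p, ~ Cn emptyF p -> forall X, d p X -> over p X) /\
  (forall p q, equivF p q -> forall X, d p X <-> d q X).

Definition cleaving (C : Fm -> Prop) : Prop :=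
  (~ exists l : list Fm, forall x, C x -> In x l) /\
  (forall p q, C p -> C q -> p <> q -> ~ equivF p q /\ Cn emptyF (or p q)).

Definition bijection_onto (pi : nat -> Fm) (C : Fm -> Prop) : Prop :=
  (forall n, C (pi n)) /\
  (forall m n, pi m = pi n -> m = n) /\
  (forall p, C p -> exists n, pi n = p).

Definition meets (p q : Fm) : Prop := exists X, over p X /\ over q X.

Definition min_pi_spec (pi : nat -> Fm) (bot p r : Fm) : Prop :=
  (exists i, meets p (pi i) /\ (forall j, j < i -> ~ meets p (pi j)) /\ r = pi i)
  \/ ((forall i, ~ meets p (pi i)) /\ r = bot).

Definition min_pi (pi : nat -> Fm) (bot p : Fm) : Fm :=
  epsilon (inhabits bot) (min_pi_spec pi bot p).

Definition delta_pi (d : Fm -> (Fm -> Prop) -> Prop) (pi : nat -> Fm) (bot : Fm)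
  : Fm -> (Fm -> Prop) -> Prop :=
  fun p => d (or p (min_pi pi bot p)).

End Logic.

(* Every ingredient of [delta_pi] respects equivalence of formulae, so CF3 is
   inherited from [delta].  For CF2, if [p] is not a tautology then neither is
   [p \/ min_pi p]: when [min_pi p] is [pi i], some complete consistent theory
   omits both [p] and [pi i], hence (being prime) omits their disjunction; when
   it is [bot], [p \/ bot] entails [p].  So [delta] lands in the complement of
   [p \/ min_pi p], which is contained in the complement of [p]. *)
From Stdlib Require Import Classical ClassicalEpsilon Wf_nat Lia
  FunctionalExtensionality PropExtensionality.

Section TarskianBoolean.
Set Implicit Arguments.
Unset Strict Implicit.

Context {Fm : Type} {Cn : (Fm -> Prop) -> (Fm -> Prop)} {neg : Fm -> Fm}
  {or : Fm -> Fm -> Fm}.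
Hypothesis Htar : tarskian Cn.
Hypothesis Hbool : boolean Cn neg or.

Lemma Cn_cut (A B : Fm -> Prop) p : Cn A p -> sub A (Cn B) -> Cn B p.
Proof.
  destruct Htar as [_ [Hmon Hidem]]; intros HAp HAB.
  apply Hidem, (Hmon _ _ HAB), HAp.
Qed.

Lemma Cn_single_self p : Cn (single p) p.
Proof. destruct Htar as [Hext _]; apply Hext; reflexivity. Qed.

Lemma Cn_addF_emptyF p r : Cn (addF (@emptyF Fm) p) r -> Cn (single p) r.
Proof.
  intros Hr; apply (Cn_cut Hr); intros y [[] | ->]; apply Cn_single_self.
Qed.

Lemma theory_Cn_mem X p : theory Cn X -> Cn X p -> X p.
Proof. intros HX Hp; apply HX, Hp. Qed.

Lemma theory_valid X p : theory Cn X -> Cn (@emptyF Fm) p -> X p.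
Proof. intros HX Hp; apply (theory_Cn_mem HX), (Cn_cut Hp); intros _ []. Qed.

Lemma theory_equivF X p q : theory Cn X -> equivF Cn p q -> X p -> X q.
Proof.
  destruct Htar as [Hext _]; intros HX Hpq Hp.
  apply (theory_Cn_mem HX), (Cn_cut (A := single p)).
  - apply Hpq, Cn_single_self.
  - intros y ->; apply Hext, Hp.
Qed.

Lemma theory_or_introl X p q : theory Cn X -> X p -> X (or p q).
Proof.
  destruct Htar as [Hext _]; destruct Hbool as [_ [_ [Hintro _]]]; intros HX Hp.
  apply (theory_Cn_mem HX), Hintro, Hext, Hp.
Qed.

(* A complete theory containing [p \/ q] but neither disjunct would contain
   both [neg p] and [neg q], and disjunction elimination makes it trivial. *)
Lemma CCT_or_prime X p q : CCT Cn neg X -> X (or p q) -> X p \/ X q.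
Proof.
  destruct Htar as [Hext _]; destruct Hbool as [_ [Hexplode [_ [_ Helim]]]].
  intros [HX [[z Hz] Hcompl]] Hpq.
  destruct (Hcompl p) as [Hp | Hnp]; auto.
  destruct (Hcompl q) as [Hq | Hnq]; auto.
  exfalso; apply Hz, (theory_Cn_mem HX).
  assert (Hz_or : Cn (addF X (or p q)) z).
  { apply Helim.
    - apply (Cn_cut (A := pair p (neg p))); [apply Hexplode; exact I |].
      intros y [-> | ->]; apply Hext; [right | left]; auto.
    - apply (Cn_cut (A := pair q (neg q))); [apply Hexplode; exact I |].
      intros y [-> | ->]; apply Hext; [right | left]; auto. }
  apply (Cn_cut Hz_or); intros y [Hy | ->]; apply Hext; auto.
Qed.

Lemma equivF_sym p q : equivF Cn p q -> equivF Cn q p.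
Proof. intros Hpq x; symmetry; apply Hpq. Qed.

Lemma Cn_or_congr_l p q m : equivF Cn p q -> Cn (single (or q m)) (or p m).
Proof.
  destruct Hbool as [_ [_ [Hintrol [Hintror Helim]]]]; intros Hpq.
  apply Cn_addF_emptyF, Helim.
  - apply Hintrol, (Cn_cut (A := single q)); [apply Hpq, Cn_single_self |].
    intros y ->; apply (proj1 Htar); right; reflexivity.
  - apply Hintror, (proj1 Htar); right; reflexivity.
Qed.

Lemma equivF_or_l p q m : equivF Cn p q -> equivF Cn (or p m) (or q m).
Proof.
  intros Hpq x; split; intros Hx; apply (Cn_cut Hx); intros y ->;
    apply Cn_or_congr_l; [| apply equivF_sym]; exact Hpq.
Qed.

Lemma Cn_or_bot_r b p : is_bot Cn b -> Cn (single (or p b)) p.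
Proof.
  destruct Hbool as [_ [_ [_ [_ Helim]]]]; intros Hb.
  apply Cn_addF_emptyF, Helim.
  - apply (proj1 Htar); right; reflexivity.
  - apply (Cn_cut (A := single b)); [apply Hb; exact I |].
    intros y ->; apply (proj1 Htar); right; reflexivity.
Qed.

Lemma valid_or_bot_r b p : is_bot Cn b -> Cn (@emptyF Fm) (or p b) -> Cn (@emptyF Fm) p.
Proof.
  intros Hb Hpb; apply (Cn_cut (Cn_or_bot_r p Hb)); intros y ->; exact Hpb.
Qed.

Lemma meets_not_valid_or p r : meets Cn neg p r -> ~ Cn (@emptyF Fm) (or p r).
Proof.
  intros [X [[HX Hp] [_ Hr]]] Hpr.
  destruct (CCT_or_prime HX (theory_valid (proj1 HX) Hpr)); auto.
Qed.

Lemma meets_equivF_l p q r : equivF Cn p q -> meets Cn neg p r -> meets Cn neg q r.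
Proof.
  intros Hpq [X [[HX Hp] HXr]]; exists X; split; [split |]; auto.
  intros Hq; apply Hp, (theory_equivF (proj1 HX) (equivF_sym Hpq) Hq).
Qed.

End TarskianBoolean.

Section MinPi.

Context {Fm : Type} (Cn : (Fm -> Prop) -> (Fm -> Prop)) (neg : Fm -> Fm).
Variables (pi : nat -> Fm) (bot : Fm).

Lemma min_pi_specP p : min_pi_spec Cn neg pi bot p (min_pi Cn neg pi bot p).
Proof.
  unfold min_pi; apply epsilon_spec.
  destruct (classic (exists i, meets Cn neg p (pi i))) as [Hex | Hnone].
  - destruct (dec_inh_nat_subset_has_unique_least_element _ (fun n => classic _) Hex)
      as [i [[Hi Hleast] _]].
    exists (pi i); left; exists i; repeat split; auto.
    intros j Hji Hj; specialize (Hleast j Hj); lia.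
  - exists bot; right; split; auto.
    intros i Hi; apply Hnone; exists i; exact Hi.
Qed.

Lemma min_pi_ext p q :
  (forall r, meets Cn neg p r <-> meets Cn neg q r) ->
  min_pi Cn neg pi bot p = min_pi Cn neg pi bot q.
Proof.
  intros Hpq; unfold min_pi; f_equal.
  apply functional_extensionality; intros r.
  apply propositional_extensionality; unfold min_pi_spec.
  setoid_rewrite Hpq; reflexivity.
Qed.

End MinPi.

Theorem mainTheorem7
  (Fm : Type) (Cn : (Fm -> Prop) -> (Fm -> Prop))
  (neg : Fm -> Fm) (or : Fm -> Fm -> Fm) (bot : Fm)
  (Hcount : countable_fm Fm)
  (Htar : tarskian Cn)
  (Hbool : boolean Cn neg or)
  (Hbot : is_bot Cn bot)
  (K : Fm -> Prop) (HK : theory Cn K)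
  (delta : Fm -> (Fm -> Prop) -> Prop) (Hdelta : choice_function Cn neg delta)
  (C : Fm -> Prop) (HC : cleaving Cn or C) (HCK : sub C K)
  (pi : nat -> Fm) (Hpi : bijection_onto pi C) :
  choice_function Cn neg (delta_pi Cn neg or delta pi bot).
Proof.
  destruct Hdelta as [Hcct [Hcf1 [Hcf2 Hcf3]]].
  unfold delta_pi; split; [| split; [| split]].
  - intros p; apply Hcct.
  - intros p; apply Hcf1.
  - intros p Hp X HX.
    assert (Hor : ~ Cn (@emptyF Fm) (or p (min_pi Cn neg pi bot p))).
    { destruct (min_pi_specP Cn neg pi bot p) as [[i [Hmeet [_ ->]]] | [_ ->]].
      - exact (meets_not_valid_or Htar Hbool Hmeet).
      - intros Hpb; exact (Hp (valid_or_bot_r Htar Hbool Hbot Hpb)). }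
    destruct (Hcf2 _ Hor X HX) as [HXcct HXor]; split; auto.
    intros Hpx; exact (HXor (theory_or_introl Htar Hbool _ (proj1 HXcct) Hpx)).
  - intros p q Hpq.
    assert (Hmin : min_pi Cn neg pi bot p = min_pi Cn neg pi bot q).
    { apply min_pi_ext; intros r; split;
        apply meets_equivF_l; auto using equivF_sym. }
    rewrite Hmin; apply Hcf3, (equivF_or_l Htar Hbool), Hpq.
Qed.
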